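(* Let $U$ be a nonempty finite set, $R\subseteq U\times U$ serial and transitive, and let $h_1$ be the height function of the closed-set lattice $\mathcal{L}(M(Reg(U,R)))$. Then for every $X\in Reg(U,R)$ (which is a closed set of $M(Reg(U,R))$), $h(X)=h_1(X)$.
   Context: $R_s(x)=\{y\in U\mid xRy\}$; $\underline{R}(X)=\{x\mid R_s(x)\subseteq X\}$, $\overline{R}(X)=\{x\mid R_s(x)\cap X\neq\emptyset\}$; $X$ is regular if $X=\underline{R}(\overline{R}(X))$, and $Reg(U,R)$ is the lattice of regular sets under inclusion, with least element $\emptyset$. $h(A)$ is the length of a maximal chain in $[\emptyset,A]$ within $Reg(U,R)$. $M(Reg(U,R))$ is the matroid on $U$ with independent sets $\{X\subseteq U\mid h(Y)\ge|X\cap Y|\ \forall Y\in Reg(U,R)\}$, rank function $r(X)=\max\{|I|\mid I\subseteq X \text{ independent}\}$, closure operator $cl(X)=\{u\in U\mid r(X\cup\{u\})=r(X)\}$; a set $X$ is closed if $cl(X)=X$. $\mathcal{L}(M)$ is the lattice of closed sets of $M$ under inclusion (join $cl(X\cup Y)$, meet $X\cap Y$), whose least element is $cl(\emptyset)$; $h_1(X)$ is the length of a maximal chain from the least element to $X$ in $\mathcal{L}(M)$. *)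

From mathcomp Require Import all_boot.
Set Implicit Arguments. Unset Strict Implicit. Unset Printing Implicit Defensive.

Section RoughSets.
Variable U : finType.
Variable R : rel U.

Definition Rs (x : U) : {set U} := [set y | R x y].

Definition lowerR (X : {set U}) : {set U} := [set x | Rs x \subset X].
Definition upperR (X : {set U}) : {set U} := [set x | Rs x :&: X != set0].

Definition regular (X : {set U}) : bool := X == lowerR (upperR X).

(* A chain of length n from a to b inside the family P: a strictly increasing
   sequence a = t_0 < t_1 < ... < t_n = b with t_1, ..., t_n in P. *)
Definition chain_in (P : pred {set U}) (a b : {set U}) (n : nat) : bool :=
  [exists t : n.-tuple {set U},
     [&& path (fun A B : {set U} => A \proper B) a t, all P t & last a t == b]].

(* Length of a maximal (= longest) chain from a to b in the family P.
   Chain lengths are bounded by #|U| since the sets strictly increase. *)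
Definition height (P : pred {set U}) (a b : {set U}) : nat :=
  \max_(n < #|U|.+1 | chain_in P a b n) n.

(* h(A): height of A in Reg(U,R), whose least element is the empty set *)
Definition h (A : {set U}) : nat := height regular set0 A.

Definition indep (X : {set U}) : bool :=
  [forall Y : {set U}, regular Y ==> (#|X :&: Y| <= h Y)].

Definition rk (X : {set U}) : nat :=
  \max_(I : {set U} | (I \subset X) && indep I) #|I|.

Definition cl (X : {set U}) : {set U} := [set u | rk (u |: X) == rk X].

Definition closedM (X : {set U}) : bool := cl X == X.

(* h_1: height in the lattice of closed sets L(M), least element cl(set0) *)
Definition h1 (X : {set U}) : nat := height closedM (cl set0) X.

End RoughSets.

From mathcomp Require Import all_boot.
Set Implicit Arguments. Unset Strict Implicit. Unset Printing Implicit Defensive.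

(* Then h X <= h1 X (regular chains are closed chains, cl set0 = set0) and
   h1 X <= rk X <= h X (the rank strictly increases along closed chains). *)

Section Heights.
Variable U : finType.
Implicit Types (P : pred {set U}) (a b c : {set U}).

Lemma path_strict_mono (Q : pred {set U}) (f : {set U} -> nat)
    (t : seq {set U}) a :
  (forall A B, Q A -> Q B -> A \proper B -> f A < f B) ->
  Q a -> all Q t -> path (fun A B : {set U} => A \proper B) a t ->
  f a + size t <= f (last a t).
Proof.
move=> fmono; elim: t a => [|y t IH] a /=; first by rewrite addn0.
move=> Qa /andP[Qy Qt] /andP[ay yt].
rewrite addnS; apply: leq_trans (IH y Qy Qt yt).
by rewrite ltn_add2r fmono.
Qed.

Lemma chain_strict_mono (Q : pred {set U}) (f : {set U} -> nat) P a b n :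
  (forall A B, Q A -> Q B -> A \proper B -> f A < f B) ->
  Q a -> {subset P <= Q} -> chain_in P a b n -> n <= f b.
Proof.
move=> fmono Qa PQ /existsP[t /and3P[tp tP /eqP tb]].
have tQ : all Q t by apply: sub_all tP.
have := path_strict_mono fmono Qa tQ tp.
by rewrite size_tuple tb; apply: leq_trans; apply: leq_addl.
Qed.

(* Chains have length at most #|U|, so they are seen by the bounded max. *)
Lemma chain_length_bound P a b n : chain_in P a b n -> n < #|U|.+1.
Proof.
move=> ch; rewrite ltnS; apply: leq_trans (max_card b).
apply: (@chain_strict_mono predT (fun A => #|A|)) ch => // A B _ _.
exact: proper_card.
Qed.

Lemma height_ge P a b n : chain_in P a b n -> n <= height P a b.
Proof.
move=> ch; have n_lt := chain_length_bound ch.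
exact: (@leq_bigmax_cond _ (fun i : 'I_#|U|.+1 => chain_in P a b i)
          (fun i => nat_of_ord i) (Ordinal n_lt)).
Qed.

Lemma height_le P a b m :
  (forall n, chain_in P a b n -> n <= m) -> height P a b <= m.
Proof. by move=> bound; apply/bigmax_leqP => i; apply: bound. Qed.

Lemma height_chain P a b n :
  chain_in P a b n -> chain_in P a b (height P a b).
Proof.
move=> ch; rewrite /height (bigmax_eq_arg (Ordinal (chain_length_bound ch))) //.
by case: arg_maxnP.
Qed.

Lemma chain_ext P a b c n :
  chain_in P a b n -> b \proper c -> P c -> chain_in P a c n.+1.
Proof.
case/existsP=> t /and3P[tp tP /eqP tb] bc Pc; apply/existsP.
exists [tuple of rcons t c].
by rewrite /= rcons_path tp tb bc all_rcons Pc tP last_rcons eqxx.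
Qed.

Lemma height_proper P a b c n :
  chain_in P a b n -> b \proper c -> P c -> height P a b < height P a c.
Proof. by move=> ch bc Pc; apply/height_ge/(chain_ext (height_chain ch)). Qed.

Lemma height_sub P P' a b : {subset P <= P'} -> height P a b <= height P' a b.
Proof.
move=> PP'; apply: height_le => n /existsP[t /and3P[tp tP tb]].
by apply/height_ge/existsP; exists t; rewrite tp tb (sub_all PP' tP).
Qed.

End Heights.

Section Matroid.
Variables (U : finType) (R : rel U).
Implicit Types (A B X : {set U}).

Lemma indep0 : indep R set0.
Proof. by apply/forallP => Y; apply/implyP => _; rewrite set0I cards0. Qed.

Lemma rk_ge X (I : {set U}) : I \subset X -> indep R I -> #|I| <= rk R X.
Proof.
move=> IX indI.
by apply: (@leq_bigmax_cond _ (fun J : {set U} => (J \subset X) && indep R J)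
          (fun J : {set U} => #|J|)); rewrite IX.
Qed.

Lemma rk_mono A B : A \subset B -> rk R A <= rk R B.
Proof.
by move=> AB; apply/bigmax_leqP => I /andP[IA indI]; rewrite rk_ge ?(subset_trans IA).
Qed.

Lemma rk_attained X : exists2 I : {set U}, (I \subset X) && indep R I & #|I| = rk R X.
Proof.
have I0 : (set0 \subset X) && indep R set0 by rewrite sub0set indep0.
by rewrite /rk (bigmax_eq_arg set0 I0); case: arg_maxnP => // I; exists I.
Qed.

(* Testing independence against Y = X itself bounds the rank of X. *)
Lemma rk_le_h X : regular R X -> rk R X <= h R X.
Proof.
move=> regX; apply/bigmax_leqP => I /andP[IX /forallP indI].
by have := implyP (indI X) regX; rewrite (setIidPl IX).
Qed.

(* Adding a point outside a closed set raises the rank. *)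
Lemma closed_rk_proper A B : closedM R A -> A \proper B -> rk R A < rk R B.
Proof.
move=> /eqP clA /properP[AB [u uB uA]].
rewrite ltn_neqAle rk_mono // andbT; apply: contraNN uA => /eqP rkAB.
have uA_le : rk R (u |: A) <= rk R B by rewrite rk_mono // subUset sub1set uB.
by rewrite -clA inE eqn_leq {1}rkAB uA_le rk_mono ?subsetUr.
Qed.

End Matroid.

Section Regular.
Variables (U : finType) (R : rel U).
Hypothesis serialR : forall x : U, exists y : U, R x y.
Hypothesis transR : transitive R.
Implicit Types (X Y Z : {set U}).

Definition final (c : U) : Prop := forall y, R c y -> R y c.

(* A successor with the fewest successors is final. *)
Lemma final_ex x : exists2 c, final c & R x c.
Proof.
have [y0 xy0] := serialR x.
case: (arg_minnP (fun y => #|Rs R y|) xy0) => y xy ymin.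
have Rs_anti a b : R a b -> Rs R b \subset Rs R a.
  by move=> ab; apply/subsetP => w; rewrite !inE; apply: transR.
have Rs_eq w : R y w -> Rs R w = Rs R y.
  by move=> yw; apply/eqP; rewrite eqEcard Rs_anti //= ymin // (transR xy).
have [z yz] := serialR y; exists z; last exact: transR yz.
move=> w zw; have yw : R y w by apply: transR zw.
by have := Rs_eq w yw; move/setP/(_ z); rewrite !inE yz.
Qed.

Lemma final_refl c : final c -> R c c.
Proof. by move=> finc; have [y cy] := serialR c; apply: transR cy (finc _ cy). Qed.

Definition sees_final X x : Prop :=
  forall c, final c -> R x c -> exists2 z, R c z & z \in X.

Lemma lowerupperP X x : reflect (sees_final X x) (x \in lowerR R (upperR R X)).
Proof.
have upP y : reflect (exists2 z, R y z & z \in X) (y \in upperR R X).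
  rewrite inE; apply: (iffP (set0Pn _)) => [[z]|[z yz zX]].
    by rewrite !inE => /andP[]; exists z.
  by exists z; rewrite !inE yz.
rewrite inE; apply: (iffP subsetP) => [sub c finc xc|seen y].
  by apply/upP/sub; rewrite inE.
rewrite inE => xy; have [c finc yc] := final_ex y.
have [z cz zX] := seen c finc (transR xy yc).
by apply/upP; exists z => //; apply: transR cz.
Qed.

Lemma regularP X x : regular R X -> reflect (sees_final X x) (x \in X).
Proof. by move=> /eqP {2}->; apply: lowerupperP. Qed.

Lemma regular_succ X x y : regular R X -> x \in X -> R x y -> y \in X.
Proof.
move=> regX xX xy; apply/(regularP _ regX) => c finc yc.
exact: (regularP _ regX xX) c finc (transR xy yc).
Qed.

Lemma regular0 : regular R set0.
Proof.
rewrite /regular eq_sym; apply/eqP/setP => x; rewrite in_set0.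
apply/negbTE/(lowerupperP _ x) => seen.
have [c finc xc] := final_ex x.
by have [z _] := seen c finc xc; rewrite inE.
Qed.

Lemma regularI X Z : regular R X -> regular R Z -> regular R (X :&: Z).
Proof.
move=> regX regZ; rewrite /regular; apply/eqP/setP => x.
apply/idP/(lowerupperP _ x) => [|seen].
  rewrite inE => /andP[xX xZ] c finc xc; exists c; first exact: final_refl.
  by rewrite inE (regular_succ regX xX xc) (regular_succ regZ xZ xc).
rewrite inE; apply/andP; split.
  apply/(regularP _ regX) => c finc xc.
  by have [z cz] := seen c finc xc; rewrite inE => /andP[zX _]; exists z.
apply/(regularP _ regZ) => c finc xc.
by have [z cz] := seen c finc xc; rewrite inE => /andP[_ zZ]; exists z.
Qed.

Lemma regular_chain0 X : regular R X -> exists n, chain_in (regular R) set0 X n.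
Proof.
move=> regX; have [->|Xn0] := eqVneq X set0.
  by exists 0; apply/existsP; exists [tuple] => /=.
by exists 1; apply/existsP; exists [tuple X]; rewrite /= regX eqxx proper0 Xn0.
Qed.

Lemma h_proper X Y : regular R X -> regular R Y -> X \proper Y -> h R X < h R Y.
Proof.
by move=> regX regY XY; have [n ch] := regular_chain0 regX; apply: height_proper ch XY regY.
Qed.

(* Extending a maximum independent subset I of a regular X by u \notin X
   keeps it independent: against a regular Y containing u, the set X :&: Y
   is regular and strictly below Y, so #|I :&: Y| <= h (X :&: Y) < h Y. *)
Lemma indep_extend X (I : {set U}) u :
  regular R X -> I \subset X -> indep R I -> u \notin X -> indep R (u |: I).
Proof.
move=> regX IX indI uX; apply/forallP => Y; apply/implyP => regY.
have indIY Z : regular R Z -> #|I :&: Z| <= h R Z.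
  by move=> regZ; apply: implyP (forallP indI Z) regZ.
have [uY|uY] := boolP (u \in Y); last first.
  suff -> : (u |: I) :&: Y = I :&: Y by apply: indIY.
  by rewrite setIUl disjoint_setI0 ?set0U // disjoints1.
have regXY := regularI regX regY.
have XY_Y : X :&: Y \proper Y.
  by apply/properP; split; [apply: subsetIr | exists u; rewrite ?inE ?(negbTE uX)].
have I_XY : #|I :&: Y| <= h R (X :&: Y).
  by rewrite -(setIidPl IX) -setIA indIY.
rewrite setIUl (setIidPl _) ?sub1set // cardsU1.
apply: leq_trans (leq_add (leq_b1 _) (leqnn _)) _.
by rewrite add1n (leq_ltn_trans I_XY) // h_proper.
Qed.

Lemma regular_closed X : regular R X -> closedM R X.
Proof.
move=> regX; apply/eqP/setP => u; rewrite inE.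
have [uX|uX] := boolP (u \in X); first by rewrite (setUidPr _) ?eqxx ?sub1set.
apply/negbTE; rewrite neq_ltn; apply/orP; right.
have [I /andP[IX indI] <-] := rk_attained R X.
have uI : u \notin I by apply: contra uX; apply: (subsetP IX).
apply: leq_trans (rk_ge (setUS [set u] IX) (indep_extend regX IX indI uX)).
by rewrite cardsU1 uI.
Qed.

End Regular.

Theorem mainTheorem10 (U : finType) (R : rel U)
  (HU : 0 < #|U|)
  (Hserial : forall x : U, exists y : U, R x y)
  (Htrans : transitive R) :
  forall X : {set U}, regular R X ->
    closedM R X /\ h R X = h1 R X.
Proof.
move=> X regX; split; first exact: regular_closed.
have closed0 : closedM R set0 by apply/regular_closed/regular0.
have cl0 : cl R set0 = set0 by apply/eqP.
apply/eqP; rewrite eqn_leq /h1 cl0; apply/andP; split.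
  by apply: height_sub => Y; apply: regular_closed.
apply: leq_trans (rk_le_h regX); apply: height_le => n ch.
have rk_incr A B : closedM R A -> closedM R B -> A \proper B -> rk R A < rk R B.
  by move=> clA _; apply: closed_rk_proper.
exact: chain_strict_mono rk_incr closed0 (fun _ clY => clY) ch.
Qed.
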